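(* Let $x:[0,1]\to\mathbb{R}$ be càdlàg and $0\le s<t\le1$. Define $\beta=\sup_{s\le u<v<w\le t}H(x(u),x(v),x(w))$. If $\eta>2\beta$, then \[N_\eta(x;[s,t])\le\frac{|x(t)-x(s)|+\beta}{\eta-\beta}.\]
   Context: $H(a,b,c)=(a\wedge c-a\wedge c\wedge b)\vee(a\vee c\vee b-a\vee c)$ is the distance from $b$ to the interval with endpoints $a$ and $c$. For $\eta>0$, $N_\eta(x;[s,t])$ (the number of $\eta$-oscillations of $x$ in $[s,t]$) is the largest integer $N$ for which there exist points $s\le t_1<t_2\le t_3<t_4\le\dots\le t_{2N-1}<t_{2N}\le t$ with $|x(t_{2k})-x(t_{2k-1})|>\eta$ for all $k=1,\dots,N$ (and $0$ if there are no such points). *)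

From Stdlib Require Import Reals.
From Coquelicot Require Import Coquelicot.
Open Scope R_scope.

(* x : [0,1] -> R is modelled as x : R -> R; only its values on [0,1] matter. *)
Definition cadlag (x : R -> R) : Prop :=
  (forall u, 0 <= u < 1 -> filterlim x (at_right u) (locally (x u))) /\
  (forall u, 0 < u <= 1 -> exists l : R, filterlim x (at_left u) (locally l)).

(* H(a,b,c) = (a∧c - a∧c∧b) ∨ (a∨c∨b - a∨c): distance from b to the interval
   with endpoints a and c. *)
Definition H (a b c : R) : R :=
  Rmax (Rmin a c - Rmin (Rmin a c) b) (Rmax (Rmax a c) b - Rmax a c).

(* There exist points s <= t_1 < t_2 <= t_3 < t_4 <= ... <= t_{2N-1} < t_{2N} <= t
   with |x(t_{2k}) - x(t_{2k-1})| > eta for k = 1..N.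
   Here a k = t_{2k+1}, b k = t_{2k+2} (0-indexed k < N). *)
Definition osc_admissible (x : R -> R) (eta s t : R) (N : nat) : Prop :=
  exists a b : nat -> R,
    (forall k, (k < N)%nat ->
       s <= a k /\ a k < b k /\ b k <= t /\ Rabs (x (b k) - x (a k)) > eta) /\
    (forall k, (S k < N)%nat -> b k <= a (S k)).

(* N_eta(x;[s,t]) is the largest N with osc_admissible x eta s t N
   (0 is always admissible). *)

(* Since [H (x u) (x v) (x w) <= beta], the value at a middle time lies within
   [beta] of the range of the outer values.  Hence a rise of more than [beta]
   is never given back by more than [beta] later on, and never starts more
   than [beta] below an earlier value.  With [eta > 2 beta] this rules out a
   rise by more than [eta] followed by a fall by more than [eta], so all
   oscillations go in the same direction; chaining them, each adds [eta] and
   each of the [N + 1] gaps around them loses at most [beta], whence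
   [|x(t) - x(s)| >= N (eta - beta) - beta]. *)
From Stdlib Require Import Reals Lra Lia.
From Coquelicot Require Import Coquelicot.
Open Scope R_scope.

Lemma H_ge0 a b c : 0 <= H a b c.
Proof. unfold H, Rmax, Rmin; repeat destruct Rle_dec; lra. Qed.

Lemma H_opp a b c : H (- a) (- b) (- c) = H a b c.
Proof. unfold H, Rmax, Rmin; repeat destruct Rle_dec; lra. Qed.

Lemma H_le_between a b c beta :
  H a b c <= beta -> Rmin a c - beta <= b <= Rmax a c + beta.
Proof. unfold H, Rmax, Rmin; repeat destruct Rle_dec; lra. Qed.

Section ThreePointBound.

Variables (y : R -> R) (s t beta : R).
Hypothesis H_le_beta : forall u v w, s <= u -> u < v -> v < w -> w <= t ->
  H (y u) (y v) (y w) <= beta.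
Hypothesis beta_ge0 : 0 <= beta.

Lemma rise_persists u v w : s <= u -> u < v -> v <= w -> w <= t ->
  y u + beta < y v -> y v - beta <= y w.
Proof.
  intros su uv vw wt rise; destruct (Req_dec v w) as [<-|v_ne_w]; [lra|].
  destruct (H_le_between _ _ _ _ (H_le_beta u v w su uv ltac:(lra) wt)) as [_ up].
  revert up; unfold Rmax; destruct Rle_dec; lra.
Qed.

Lemma rise_starts_high u v w : s <= u -> u <= v -> v < w -> w <= t ->
  y v + beta < y w -> y u - beta <= y v.
Proof.
  intros su uv vw wt rise; destruct (Req_dec u v) as [<-|u_ne_v]; [lra|].
  destruct (H_le_between _ _ _ _ (H_le_beta u v w su ltac:(lra) vw wt)) as [low _].
  revert low; unfold Rmin; destruct Rle_dec; lra.
Qed.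

Lemma fall_starts_low u v w : s <= u -> u <= v -> v < w -> w <= t ->
  y w + beta < y v -> y v <= y u + beta.
Proof.
  intros su uv vw wt fall; destruct (Req_dec u v) as [<-|u_ne_v]; [lra|].
  destruct (H_le_between _ _ _ _ (H_le_beta u v w su ltac:(lra) vw wt)) as [_ up].
  revert up; unfold Rmax; destruct Rle_dec; lra.
Qed.

Variable eta : R.
Hypothesis eta_gt : 2 * beta < eta.

Lemma no_rise_then_fall a1 b1 a2 b2 :
  s <= a1 -> a1 < b1 -> b1 <= a2 -> a2 < b2 -> b2 <= t ->
  y a1 + eta < y b1 -> y b2 + eta < y a2 -> False.
Proof.
  intros sa1 ab1 ba2 ab2 bt rise fall.
  pose proof (fall_starts_low b1 a2 b2 ltac:(lra) ba2 ab2 bt ltac:(lra)) as a2_low.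
  pose proof (rise_persists a1 b1 b2 sa1 ab1 ltac:(lra) bt ltac:(lra)) as b1_low.
  lra.
Qed.

Variables (a b : nat -> R) (N : nat).
Hypothesis osc : forall k, (k < N)%nat ->
  s <= a k /\ a k < b k /\ b k <= t /\ Rabs (y (b k) - y (a k)) > eta.
Hypothesis osc_ordered : forall k, (S k < N)%nat -> b k <= a (S k).

Lemma osc_rise_propagates : (0 < N)%nat -> y (a 0%nat) + eta < y (b 0%nat) ->
  forall k, (k < N)%nat -> y (a k) + eta < y (b k).
Proof.
  intros N_gt0 rise0; induction k as [|k IHk]; intros kN; [exact rise0|].
  pose proof (IHk ltac:(lia)) as rise_k.
  destruct (osc k ltac:(lia)) as (sa & ab & bt & _).
  destruct (osc (S k) kN) as (_ & ab' & bt' & big).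
  pose proof (osc_ordered k kN) as ba'.
  revert big; unfold Rabs; destruct Rcase_abs; intro big; [|lra].
  exfalso; apply (no_rise_then_fall (a k) (b k) (a (S k)) (b (S k))); lra.
Qed.

Section Rising.

Hypothesis osc_rise : forall k, (k < N)%nat -> y (a k) + eta < y (b k).

Lemma osc_rise_peak k : (k < N)%nat ->
  y s - beta + INR (S k) * eta - INR k * beta < y (b k).
Proof.
  induction k as [|k IHk]; intros kN.
  - destruct (osc 0%nat kN) as (sa & ab & bt & _).
    pose proof (rise_starts_high s (a 0%nat) (b 0%nat) ltac:(lra) sa ab bt
                     ltac:(pose proof (osc_rise 0%nat kN); lra)) as a_high.
    pose proof (osc_rise 0%nat kN); simpl; lra.
  - pose proof (IHk ltac:(lia)) as peak_k.
    destruct (osc k ltac:(lia)) as (sa & ab & bt & _).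
    destruct (osc (S k) kN) as (_ & ab' & bt' & _).
    pose proof (rise_persists (a k) (b k) (a (S k)) sa ab (osc_ordered k kN)
                   ltac:(lra) ltac:(pose proof (osc_rise k ltac:(lia)); lra)) as kept.
    pose proof (osc_rise (S k) kN); rewrite !S_INR in *; lra.
Qed.

Lemma osc_rise_bound : (0 < N)%nat -> INR N * (eta - beta) - beta < y t - y s.
Proof.
  intros N_gt0; set (M := Nat.pred N).
  replace (INR N) with (INR (S M)) by (f_equal; unfold M; lia).
  pose proof (osc_rise_peak M ltac:(lia)) as peak.
  destruct (osc M ltac:(lia)) as (sa & ab & bt & _).
  pose proof (rise_persists (a M) (b M) t sa ab bt ltac:(lra)
                 ltac:(pose proof (osc_rise M ltac:(lia)); lra)) as kept.
  rewrite S_INR in *; lra.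
Qed.

End Rising.

Lemma osc_first_rise_bound : (0 < N)%nat -> y (a 0%nat) + eta < y (b 0%nat) ->
  INR N * (eta - beta) - beta < y t - y s.
Proof.
  intros N_gt0 rise0; apply osc_rise_bound; auto.
  apply osc_rise_propagates; auto.
Qed.

End ThreePointBound.

Lemma osc_admissible_bound y s t beta eta N :
  (forall u v w, s <= u -> u < v -> v < w -> w <= t -> H (y u) (y v) (y w) <= beta) ->
  0 <= beta -> 2 * beta < eta -> osc_admissible y eta s t N ->
  INR N * (eta - beta) - beta <= Rabs (y t - y s).
Proof.
  intros H_le_beta beta_ge0 eta_gt [a [b [osc osc_ordered]]].
  destruct N as [|M]; [simpl; pose proof (Rabs_pos (y t - y s)); lra|].
  destruct (osc 0%nat ltac:(lia)) as (_ & _ & _ & big).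
  revert big; unfold Rabs at 1; destruct Rcase_abs as [first_fall|first_rise]; intro big.
  - assert (bound : INR (S M) * (eta - beta) - beta < - y t - - y s).
    { apply (osc_first_rise_bound (fun r => - y r) s t beta) with (a := a) (b := b);
        auto; try lia; try lra.
      - intros u v w su uv vw wt; rewrite H_opp; auto.
      - intros k kN; rewrite Rabs_minus_sym.
        replace (- y (a k) - - y (b k)) with (y (b k) - y (a k)) by ring; auto. }
    unfold Rabs; destruct Rcase_abs; lra.
  - assert (bound : INR (S M) * (eta - beta) - beta < y t - y s).
    { apply (osc_first_rise_bound y s t beta) with (a := a) (b := b);
        auto; try lia; lra. }
    unfold Rabs; destruct Rcase_abs; lra.
Qed.

Theorem lemma5 (x : R -> R) (s t eta beta : R) :
  cadlag x ->
  0 <= s -> s < t -> t <= 1 ->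
  is_lub (fun r => exists u v w, s <= u /\ u < v /\ v < w /\ w <= t /\
                                 r = H (x u) (x v) (x w)) beta ->
  eta > 2 * beta ->
  forall N : nat, osc_admissible x eta s t N ->
    INR N <= (Rabs (x t - x s) + beta) / (eta - beta).
Proof.
  intros _ _ st _ [beta_ub _] eta_gt N adm.
  assert (H_le_beta : forall u v w, s <= u -> u < v -> v < w -> w <= t ->
      H (x u) (x v) (x w) <= beta).
  { intros u v w su uv vw wt; apply beta_ub; exists u, v, w; repeat split; auto. }
  assert (beta_ge0 : 0 <= beta).
  { apply Rle_trans with (H (x s) (x ((s + t) / 2)) (x t)); [apply H_ge0|].
    apply H_le_beta; lra. }
  pose proof (osc_admissible_bound x s t beta eta N H_le_beta beta_ge0 eta_gt adm) as bound.
  apply Rle_div_r; lra.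
Qed.
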